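(* Let $C'$ be an odd-like binary Euclidean LCD $[n,k,d]$ code. Then there exist a binary Euclidean LCD $[n-1,k-1,d']$ code $C$ with $d'\ge d$, a generator matrix $G$ of $C$, and a vector $\mathbf{x}\in C^{\perp_E}$ of even Hamming weight, such that $C'$ is equivalent to the binary code with generator matrix $\begin{pmatrix}1&\mathbf{x}\\ \mathbf{0}&G\end{pmatrix}$.
   Context: A binary $[n,k,d]$ code is a $k$-dimensional subspace of $\mathbb{F}_2^n$ with minimum nonzero Hamming weight $d$. $C^{\perp_E}$ is the dual with respect to $\langle x,y\rangle_E=\sum x_iy_i$; $C$ is LCD if $C\cap C^{\perp_E}=\{0\}$. A vector $x\in\mathbb{F}_2^n$ is even-like if $\sum x_i=0$ and odd-like otherwise; a binary code is even-like if all its codewords are even-like, and odd-like otherwise. Two codes are equivalent if one is obtained from the other by a monomial transformation (for binary codes, a coordinate permutation). $\mathbf{0}$ denotes a zero column. *)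

From HB Require Import structures.
From mathcomp Require Import all_boot all_order all_algebra all_fingroup.
Set Implicit Arguments. Unset Strict Implicit. Unset Printing Implicit Defensive.
Import GRing.Theory.
Local Open Scope ring_scope.

(* Binary linear codes of length n are represented as row spaces of matrices
   over 'F_2: a matrix A : 'M['F_2]_(m, n) represents the code (A)%MS,
   i.e. the span of its rows. *)
Notation F2 := 'F_2.

Definition in_code m n (A : 'M[F2]_(m, n)) (x : 'rV[F2]_n) : bool := (x <= A)%MS.

Definition wt n (x : 'rV[F2]_n) : nat := #|[set i : 'I_n | x 0 i != 0]|.

Definition edual m n (A : 'M[F2]_(m, n)) : 'M[F2]_n := kermx A^T.

Definition is_LCD m n (A : 'M[F2]_(m, n)) : bool := (A :&: edual A)%MS == 0.

Definition cdim m n (A : 'M[F2]_(m, n)) : nat := \rank A.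

Definition is_mindist m n (A : 'M[F2]_(m, n)) (d : nat) : Prop :=
  (exists x, [/\ in_code A x, x != 0 & wt x = d]) /\
  (forall x, in_code A x -> x != 0 -> (d <= wt x)%N).

Definition even_like_vec n (x : 'rV[F2]_n) : bool := \sum_i x 0 i == 0.
Definition odd_like m n (A : 'M[F2]_(m, n)) : Prop :=
  exists x, in_code A x /\ ~~ even_like_vec x.

Definition gen_matrix k m n (G : 'M[F2]_(k, n)) (A : 'M[F2]_(m, n)) : bool :=
  row_free G && (G == A)%MS.

Definition code_equiv m1 m2 n (A : 'M[F2]_(m1, n)) (B : 'M[F2]_(m2, n)) : Prop :=
  exists s : 'S_n, (col_perm s A == B)%MS.

(* Let P be the orthogonal projection onto the LCD code C'; it exists because
   B B^T is invertible for any basis B of C'.  Over F_2 the diagonal entry P_jj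
   equals the j-th row sum of P, so every codeword x = x P has coordinate sum
   sum_j x_j P_jj; since C' is odd-like, some P_ii = 1.  The row u = P_i is a
   codeword with u_i = 1 and <c, u> = c_i for all c in C'.  After moving
   coordinate i to the front, C' is spanned by u = (1 | x) and by (0 | C),
   where C is C' shortened at coordinate 0.  From <c, u> = c_0 one reads off
   that x is orthogonal to C, that wt u is odd (hence wt x even), and that any
   z in C meet its dual lifts to (0 | z) in C' meet its dual, so C is LCD. *)

From HB Require Import structures.
From mathcomp Require Import all_boot all_order all_algebra all_fingroup.
Set Implicit Arguments. Unset Strict Implicit. Unset Printing Implicit Defensive.
Import GRing.Theory.
Local Open Scope ring_scope.

Lemma F2_mulrr (a : F2) : a * a = a.
Proof. by case: a => [[|[|//]]] ?; apply/val_inj. Qed.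

Lemma F2_neq0 (a : F2) : a != 0 -> a = 1.
Proof. by case: a => [[|[|//]]] //= ? _; apply/val_inj. Qed.

Lemma F2_natr_eq1 (k : nat) : (k%:R == 1 :> F2) = odd k.
Proof. by rewrite -(Fp_nat_mod (isT : prime 2)) modn2; case: odd. Qed.

Lemma wtE n (x : 'rV[F2]_n) : wt x = (\sum_j ((x 0 j != 0)%R : nat))%N.
Proof. by rewrite /wt -sum1_card big_mkcond; apply: eq_bigr => j _; rewrite inE. Qed.

Lemma wt0 n : wt (0 : 'rV[F2]_n) = 0%N.
Proof. by rewrite wtE big1 // => j _; rewrite mxE eqxx. Qed.

Lemma sum_row_wt n (x : 'rV[F2]_n) : \sum_j x 0 j = (wt x)%:R.
Proof.
rewrite wtE natr_sum; apply: eq_bigr => j _.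
by case: (x 0 j) => [[|[|//]]] ?; apply/val_inj.
Qed.

Lemma mulmx_trr_wt n (x : 'rV[F2]_n) : x *m x^T = (wt x)%:R%:M.
Proof.
apply/matrixP => i j; rewrite !ord1 !mxE -sum_row_wt /=.
by apply: eq_bigr => k _; rewrite mxE F2_mulrr.
Qed.

Lemma wt_row_mx n1 n2 (x1 : 'rV[F2]_n1) (x2 : 'rV[F2]_n2) :
  wt (row_mx x1 x2) = (wt x1 + wt x2)%N.
Proof.
rewrite !wtE big_split_ord /=.
by congr (_ + _)%N; apply: eq_bigr => j _; rewrite ?row_mxEl ?row_mxEr.
Qed.

Lemma wt_col_perm n (s : 'S_n) (x : 'rV[F2]_n) : wt (col_perm s x) = wt x.
Proof.
rewrite /wt -(card_preimset [set j | x 0 j != 0] (@perm_inj _ s)).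
by apply: eq_card => j; rewrite !inE mxE.
Qed.

Section LinearCodes.
Variable F : fieldType.

Definition lcd m n (A : 'M[F]_(m, n)) := (A :&: kermx A^T)%MS == 0.

Lemma mulmx_trS_eq0 p m1 m2 n
    (z : 'M[F]_(p, n)) (A : 'M[F]_(m1, n)) (B : 'M[F]_(m2, n)) :
  (A <= B)%MS -> z *m B^T = 0 -> z *m A^T = 0.
Proof. by case/submxP => W -> zB; rewrite trmx_mul mulmxA zB mul0mx. Qed.

Lemma lcdP m n (A : 'M[F]_(m, n)) :
  reflect (forall z : 'rV_n, (z <= A)%MS -> z *m A^T = 0 -> z = 0) (lcd A).
Proof.
apply: (iffP rowV0P) => lcdA z.
  by move=> zA /eqP zo; apply: lcdA; rewrite sub_capmx zA sub_kermx zo.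
by rewrite sub_capmx sub_kermx => /andP [zA /eqP zo]; apply: lcdA.
Qed.

Lemma col_permKV m n (s : 'S_n) (A : 'M[F]_(m, n)) : col_perm s (col_perm s^-1 A) = A.
Proof. by rewrite -col_permM mulgV col_perm1. Qed.

Lemma col_perm_submx m1 m2 n (s : 'S_n) (A : 'M[F]_(m1, n)) (B : 'M[F]_(m2, n)) :
  (col_perm s A <= col_perm s B)%MS = (A <= B)%MS.
Proof. by rewrite !col_permE submxMfree // row_free_unit unitmx_perm. Qed.

Lemma submx_col_perm m1 m2 n (s : 'S_n) (A : 'M[F]_(m1, n)) (B : 'M[F]_(m2, n)) :
  (A <= col_perm s B)%MS = (col_perm s^-1 A <= B)%MS.
Proof. by rewrite -(col_perm_submx s (col_perm s^-1 A)) col_permKV. Qed.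

Lemma mxrank_col_perm m n (s : 'S_n) (A : 'M[F]_(m, n)) : \rank (col_perm s A) = \rank A.
Proof. by rewrite col_permE mxrankMfree // row_free_unit unitmx_perm. Qed.

Lemma lcd_col_perm m n (s : 'S_n) (A : 'M[F]_(m, n)) : lcd A -> lcd (col_perm s A).
Proof.
move=> /lcdP lcdA; apply/lcdP => z; rewrite submx_col_perm tr_col_perm mul_row_perm.
move=> zA zo; rewrite -(col_permKV s z) (lcdA _ zA zo).
by rewrite col_permE mul0mx.
Qed.

(* Only meaningful when [lcd A]; otherwise [invmx] returns its argument. *)
Definition orthoproj m n (A : 'M[F]_(m, n)) : 'M[F]_n :=
  let B := row_base A in B^T *m invmx (B *m B^T) *m B.

Lemma orthoproj_sym m n (A : 'M[F]_(m, n)) : (orthoproj A)^T = orthoproj A.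
Proof.
rewrite /orthoproj; move: (row_base A) => B.
by rewrite !trmx_mul trmxK trmx_inv trmx_mul trmxK mulmxA.
Qed.

Lemma orthoproj_sub m n (A : 'M[F]_(m, n)) : (orthoproj A <= A)%MS.
Proof. by apply: submx_trans (submxMl _ _) _; rewrite eq_row_base. Qed.

Section Projection.
Variables (m n : nat) (A : 'M[F]_(m, n)).
Hypothesis lcdA : lcd A.

Lemma unitmx_row_base_lcd : row_base A *m (row_base A)^T \in unitmx.
Proof.
have /lcdP lcd_rows := lcdA.
have AB : (A <= row_base A)%MS by rewrite eq_row_base.
rewrite -row_free_unit -kermx_eq0; apply/rowV0P => w.
rewrite sub_kermx mulmxA => /eqP wBBt.
apply: (row_free_inj (row_base_free A)); rewrite mul0mx.
apply: lcd_rows; last exact: mulmx_trS_eq0 AB wBBt.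
by apply: submx_trans (submxMl _ _) _; rewrite eq_row_base.
Qed.

Lemma mulmx_orthoproj p (X : 'M[F]_(p, n)) : (X <= A)%MS -> X *m orthoproj A = X.
Proof.
rewrite -(eq_row_base A) => /submxP [W ->].
rewrite /orthoproj; move: (row_base A) unitmx_row_base_lcd => B BBu.
by rewrite !mulmxA -(mulmxA W) -(mulmxA W) mulmxV // mulmx1.
Qed.

End Projection.

Definition represents_coord m n (A : 'M[F]_(m, n)) (i : 'I_n) (u : 'rV[F]_n) :=
  forall p (X : 'M_(p, n)), (X <= A)%MS -> X *m u^T = col i X.

Lemma orthoproj_coord m n (A : 'M[F]_(m, n)) i :
  lcd A -> represents_coord A i (row i (orthoproj A)).
Proof.
move=> lcdA p X XA.
by rewrite tr_row orthoproj_sym !colE mulmxA mulmx_orthoproj.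
Qed.

Lemma represents_coord_tperm0 m n (A : 'M[F]_(m, n.+1)) i u :
  represents_coord A i u ->
  represents_coord (col_perm (tperm 0 i) A) 0 (col_perm (tperm 0 i) u).
Proof.
move=> u_coord p X; rewrite submx_col_perm tr_col_perm mul_row_perm => /u_coord ->.
by apply/matrixP => r j; rewrite !mxE tpermV tpermR.
Qed.

End LinearCodes.

Lemma mxrank_block1 (F : fieldType) p k n (X : 'M[F]_(p, n)) (G : 'M[F]_(k, n)) :
  \rank (block_mx 1%:M X 0 G) = (p + \rank G)%N.
Proof.
have -> : block_mx 1%:M X 0 G = block_mx 1%:M 0 0 G *m block_mx 1%:M X 0 1%:M.
  by rewrite mulmx_block !mulmx1 !mul1mx !mulmx0 !mul0mx !addr0 add0r.
rewrite mxrankMfree ?rank_diag_block_mx ?mxrank1 //.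
by rewrite row_free_unit unitmxE det_ublock !det1 mulr1 unitr1.
Qed.

Lemma row_mx0S (F : fieldType) p r q n (Y : 'M[F]_(p, n)) (Z : 'M[F]_(r, n)) :
  (Y <= Z)%MS -> (row_mx (0 : 'M_(p, q)) Y <= row_mx (0 : 'M_(r, q)) Z)%MS.
Proof. by case/submxP => W ->; rewrite -(mulmx0 _ W) -mul_mx_row submxMl. Qed.

Lemma col0_row_mx0 (F : fieldType) p n (Y : 'M[F]_(p, n)) :
  col 0 (row_mx (0 : 'M_(p, 1)) Y) = 0.
Proof. by rewrite -[X in col X _](lshift0 n 0) (colKl (0 : 'I_1)) col0. Qed.

Lemma row_mx1_rsubmx (F : fieldType) n (u : 'rV[F]_(1 + n)) :
  u 0 0 = 1 -> row_mx 1 (rsubmx u) = u.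
Proof.
move=> u0; rewrite -[RHS](hsubmxK u); congr row_mx.
by apply/matrixP => i j; rewrite !ord1 !mxE (lshift0 n 0) u0.
Qed.

Section ShortenedCode.
Variables (F : fieldType) (m n : nat) (A : 'M[F]_(m, 1 + n)) (u : 'rV[F]_(1 + n)).
Hypotheses (uA : (u <= A)%MS) (u0 : u 0 0 = 1) (u_coord : represents_coord A 0 u).

Local Notation D := (A - col 0 A *m u).

(* The rows c - c_0 u of D span the codewords vanishing at coordinate 0. *)
Definition shortened : 'M[F]_n := <<rsubmx D>>%MS.
Local Notation E := shortened.

Lemma row_mx0_shortening : row_mx 0 (rsubmx D) = D.
Proof.
rewrite -[RHS]hsubmxK; congr row_mx; apply/matrixP => r j.
by rewrite ord1 !mxE big_ord1 !mxE (lshift0 n 0) u0 mulr1 subrr.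
Qed.

Lemma shortening_sub : (D <= A)%MS.
Proof. by rewrite addmx_sub ?eqmx_opp // (submx_trans (submxMl _ _) uA). Qed.

Lemma row_mx0_sub_shortened p (y : 'M[F]_(p, n)) : (y <= E)%MS -> (row_mx 0 y <= A)%MS.
Proof.
rewrite genmxE => yD; apply: submx_trans shortening_sub.
by rewrite -row_mx0_shortening row_mx0S.
Qed.

Lemma shortened_block_eqmx :
  (A == block_mx (1 : 'M_1) (rsubmx u) 0 (row_base E))%MS.
Proof.
rewrite block_mxEv row_mx1_rsubmx //; apply/andP; split; last first.
  by rewrite col_mx_sub uA row_mx0_sub_shortened ?eq_row_base.
rewrite -[X in (X <= _)%MS](subrK (col 0 A *m u)) -addsmxE.
apply: addmx_sub; last by apply: submx_trans (submxMl _ _) _; rewrite addsmxSl.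
apply: submx_trans (addsmxSr _ _); rewrite -row_mx0_shortening row_mx0S //.
by rewrite eq_row_base genmxE.
Qed.

Lemma mxrank_shortened : \rank A = (\rank E).+1.
Proof.
by rewrite (eqmx_rank shortened_block_eqmx) mxrank_block1 eq_row_base.
Qed.

Lemma shortened_dual : (rsubmx u <= kermx E^T)%MS.
Proof.
have DA : (row_mx 0 (rsubmx D) <= A)%MS by rewrite row_mx0_shortening shortening_sub.
have := u_coord DA; rewrite col0_row_mx0 -[X in _ *m X^T = _](row_mx1_rsubmx u0).
rewrite tr_row_mx mul_row_col mul0mx add0r.
move/(congr1 trmx); rewrite trmx_mul trmxK trmx0 sub_kermx => uD.
by apply/eqP; apply: mulmx_trS_eq0 uD; rewrite genmxE.
Qed.

Lemma lcd_shortened : lcd A -> lcd E.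
Proof.
move=> /lcdP lcdA; apply/lcdP => y yE yo.
have /andP [A_block _] := shortened_block_eqmx.
suff y0 : row_mx (0 : 'rV_1) y = 0 by move/eqP: y0; rewrite row_mx_eq0 => /andP [_ /eqP].
apply: lcdA; first exact: row_mx0_sub_shortened.
apply: mulmx_trS_eq0 A_block _.
rewrite block_mxEv row_mx1_rsubmx // tr_col_mx mul_mx_row.
rewrite u_coord ?row_mx0_sub_shortened // col0_row_mx0 tr_row_mx mul_row_col.
have GE : (row_base E <= E)%MS by rewrite eq_row_base.
by rewrite mul0mx add0r (mulmx_trS_eq0 GE yo) row_mx0.
Qed.

End ShortenedCode.

Lemma odd_like_coord_vector m n (A : 'M[F2]_(m, n)) :
  is_LCD A -> odd_like A ->
  exists i u, [/\ (u <= A)%MS, u 0 i = 1 & represents_coord A i u].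
Proof.
move=> lcdA [x [xA x_odd]]; pose P := orthoproj A.
have PP : P *m P = P := mulmx_orthoproj lcdA (orthoproj_sub A).
(* P_jj = sum_l P_jl P_lj = sum_l P_jl^2 = sum_l P_jl over F_2. *)
have Psym a b : P a b = P b a by rewrite -{1}[P]orthoproj_sym mxE.
have row_sumP j : \sum_l P j l = P j j.
  by rewrite -[in RHS]PP mxE; apply: eq_bigr => l _; rewrite (Psym l) F2_mulrr.
have sum_x : \sum_l x 0 l = \sum_j x 0 j * P j j.
  rewrite -{1}(mulmx_orthoproj lcdA xA); under eq_bigr do rewrite mxE.
  by rewrite exchange_big; apply: eq_bigr => j _; rewrite -mulr_sumr row_sumP.
have [j Pj] : exists j, P j j != 0.
  apply/existsP; apply: contraR x_odd => /existsPn P0.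
  by rewrite /even_like_vec sum_x big1 // => j _; rewrite (eqP (negPn (P0 j))) mulr0.
exists j, (row j P); split; last exact: orthoproj_coord.
  exact: submx_trans (row_sub _ _) (orthoproj_sub A).
by rewrite mxE (F2_neq0 Pj).
Qed.

Lemma wt_coord_vector m n (A : 'M[F2]_(m, n)) i u :
  (u <= A)%MS -> represents_coord A i u -> (wt u)%:R = u 0 i.
Proof. by move=> uA /(_ _ _ uA) /matrixP /(_ 0 0); rewrite mulmx_trr_wt !mxE eqxx. Qed.

Lemma even_wt_coord_rsubmx m n (A : 'M[F2]_(m, 1 + n)) u :
  (u <= A)%MS -> u 0 0 = 1 -> represents_coord A 0 u -> ~~ odd (wt (rsubmx u)).
Proof.
move=> uA u0 /(wt_coord_vector uA)/eqP; rewrite u0 F2_natr_eq1.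
rewrite -{1}(row_mx1_rsubmx u0) wt_row_mx oddD.
suff -> : wt (1 : 'rV[F2]_1) = 1%N by [].
by rewrite wtE big_ord1 !mxE.
Qed.

Lemma min_wt_col_perm m n (A : 'M[F2]_(m, n)) (s : 'S_n) d :
  (forall x, in_code A x -> x != 0 -> (d <= wt x)%N) ->
  forall x, in_code (col_perm s A) x -> x != 0 -> (d <= wt x)%N.
Proof.
move=> mdA x; rewrite /in_code submx_col_perm -(wt_col_perm s^-1) => xA x0.
apply: mdA xA _; apply: contra x0 => /eqP x0.
by rewrite -(col_permKV s x) x0 col_permE mul0mx.
Qed.

Lemma min_wt_shortened m n (A : 'M[F2]_(m, 1 + n)) u d :
  (u <= A)%MS -> u 0 0 = 1 ->
  (forall x, in_code A x -> x != 0 -> (d <= wt x)%N) ->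
  forall y, in_code (shortened A u) y -> y != 0 -> (d <= wt y)%N.
Proof.
move=> uA u0 mdA y yE y0.
have := mdA (row_mx (0 : 'rV_1) y); rewrite wt_row_mx wt0; apply.
  exact: (row_mx0_sub_shortened uA u0 yE).
by rewrite row_mx_eq0 negb_and y0 orbT.
Qed.

Theorem theorem3p6 (n k d m : nat) (C' : 'M['F_2]_(m, n)) :
  is_LCD C' -> odd_like C' -> cdim C' = k -> is_mindist C' d ->
  exists (n1 k1 : nat) (en : n = n1.+1), k = k1.+1 /\
  exists (C : 'M['F_2]_n1) (G : 'M['F_2]_(k1, n1)) (x : 'rV['F_2]_n1),
    [/\ is_LCD C, cdim C = k1,
        (forall y, in_code C y -> y != 0 -> (d <= wt y)%N) &
        gen_matrix G C] /\
    [/\ in_code (edual C) x, ~~ odd (wt x) &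
        code_equiv (castmx (erefl m, en) C')
                   (block_mx (1 : 'M['F_2]_1) x 0 G)].
Proof.
case: n C' => [|n] A lcdA oddA rkA [_ mdA].
  by case: oddA => x [_]; rewrite /even_like_vec big_ord0 eqxx.
have [i [v [vA vi v_coord]]] := odd_like_coord_vector lcdA oddA.
pose s := tperm 0 i; pose A' := col_perm s A; pose u := col_perm s v.
have uA : (u <= A')%MS by rewrite col_perm_submx.
have u0 : u 0 0 = 1 by rewrite mxE tpermL.
have u_coord : represents_coord A' 0 u := represents_coord_tperm0 v_coord.
pose E := shortened A' u.
exists n, (\rank E), erefl; split.
  by rewrite -rkA /cdim -(mxrank_col_perm s) (mxrank_shortened uA u0).
exists E, (row_base E), (rsubmx (u : 'rV_(1 + n))); split; split.
- exact: lcd_shortened uA u0 u_coord (lcd_col_perm s lcdA).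
- by [].
- exact: min_wt_shortened uA u0 (min_wt_col_perm mdA).
- by rewrite /gen_matrix row_base_free; apply/eqmxP; exact: eq_row_base.
- exact: shortened_dual.
- exact: even_wt_coord_rsubmx uA u0 u_coord.
- by exists s; rewrite castmx_id; exact: shortened_block_eqmx.
Qed.
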